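(* There exists a crystal framework $\mathcal{C}=(G,p)$ in $\mathbb{R}^2$ which is first-order rigid and which is continuously flexible, i.e. there are $t_1>0$ and placements $p_t:V\to\mathbb{R}^2$, $t\in[0,t_1]$, with $p_0=p$, $t\mapsto p_t(v)$ continuous for every vertex $v$, $\|p_t(v)-p_t(w)\|=\|p(v)-p(w)\|$ for every edge $vw\in E$ and every $t$, and such that for some $t$ the placement $p_t$ is not of the form $T\circ p$ for an isometry $T$ of $\mathbb{R}^2$.
   Context: A crystal framework in $\mathbb{R}^d$ is a bar-joint framework $(G,p)$, $G=(V,E)$ a countable simple graph, $p:V\to\mathbb{R}^d$ injective, for which there are $d$ linearly independent vectors $a_1,\dots,a_d$ such that $\mathbb{Z}^d$ acts on $G$ by graph automorphisms $v\mapsto k\cdot v$ with $p(k\cdot v)=p(v)+\sum_ik_ia_i$ and with finitely many orbits of vertices and of edges. An infinitesimal flex is a map $u:V\to\mathbb{C}^d$ with $(u(v)-u(w))\cdot(p(v)-p(w))=0$ for all $vw\in E$; the framework is first-order rigid if every infinitesimal flex lies in the complex linear span of the rigid-motion fields $v\mapsto Sp(v)+b$ ($S$ real skew-symmetric, $b\in\mathbb{R}^d$). *)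

From HB Require Import structures.
From mathcomp Require Import all_boot all_order all_algebra.
From mathcomp Require Import all_classical all_reals all_analysis.
From mathcomp Require Import Rstruct Rstruct_topology.
From mathcomp.real_closed Require Import complex.

Set Implicit Arguments.
Unset Strict Implicit.
Unset Printing Implicit Defensive.
Import Order.TTheory GRing.Theory Num.Theory.
Local Open Scope ring_scope.

Notation RR := Rdefinitions.R.
Notation CC := (complex RR).
Notation pt := 'cV[RR]_2.

Definition latvec (a1 a2 : pt) (k : int * int) : pt := k.1%:~R *: a1 + k.2%:~R *: a2.

Definition edist (x y : pt) : RR :=
  Num.sqrt (\sum_(i < 2) ((x - y) i 0) ^+ 2).

Definition isometry2 (T : pt -> pt) : Prop :=
  forall x y, edist (T x) (T y) = edist x y.

Definition crystal_framework (V : countType) (E : V -> V -> bool) (p : V -> pt) : Prop :=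
  (forall v w, E v w = E w v) /\ (forall v, ~~ E v v) /\
  injective p /\
  exists (a1 a2 : pt) (act : int * int -> V -> V),
    (forall c1 c2 : RR, c1 *: a1 + c2 *: a2 = 0 -> c1 = 0 /\ c2 = 0) /\
    (forall v, act (0, 0) v = v) /\
    (forall k l v, act (k.1 + l.1, k.2 + l.2) v = act k (act l v)) /\
    (forall k v w, E (act k v) (act k w) = E v w) /\
    (forall k v, p (act k v) = p v + latvec a1 a2 k) /\
    (exists s : seq V, forall v, exists k x, x \in s /\ v = act k x) /\
    (exists s : seq (V * V), forall v w, E v w ->
        exists k x, x \in s /\
          ((v = act k x.1 /\ w = act k x.2) \/ (v = act k x.2 /\ w = act k x.1))).

Definition cplx_pt (x : pt) : 'cV[CC]_2 := map_mx (fun r : RR => (r%:C)%C) x.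

Definition inf_flex (V : countType) (E : V -> V -> bool) (p : V -> pt)
  (u : V -> 'cV[CC]_2) : Prop :=
  forall v w, E v w ->
    \sum_(i < 2) (u v - u w) i 0 * (cplx_pt (p v - p w)) i 0 = 0.

Definition in_rigid_span (V : countType) (p : V -> pt) (u : V -> 'cV[CC]_2) : Prop :=
  exists (n : nat) (lam : 'I_n -> CC) (S : 'I_n -> 'M[RR]_2) (b : 'I_n -> pt),
    (forall i, (S i)^T = - S i) /\
    forall v, u v = \sum_(i < n) lam i *: cplx_pt (S i *m p v + b i).

Definition first_order_rigid (V : countType) (E : V -> V -> bool) (p : V -> pt) : Prop :=
  forall u, inf_flex E p u -> in_rigid_span p u.

Definition continuously_flexible (V : countType) (E : V -> V -> bool) (p : V -> pt) : Prop :=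
  exists (t1 : RR) (P : RR -> V -> pt),
    0 < t1 /\
    P 0 = p /\
    (forall v, {within `[0, t1], continuous (fun t => P t v)}%classic) /\
    (forall t, t \in `[0, t1] -> forall v w, E v w ->
        edist (P t v) (P t w) = edist (p v) (p w)) /\
    (exists t, t \in `[0, t1] /\
        ~ (exists T : pt -> pt, isometry2 T /\ forall v, P t v = T (p v))).

From Pilot Require Import Defs.
From HB Require Import structures.
From mathcomp Require Import all_boot all_order all_algebra.
From mathcomp Require Import all_classical all_reals all_analysis.
From mathcomp Require Import Rstruct Rstruct_topology.
From mathcomp.real_closed Require Import complex.
From mathcomp Require Import ring lra zify.

(* The framework is a braced triangular lattice with periods (-1, 1) and
   (5, 6) carrying at every lattice joint two hinged triangles A and B.  A bar
   joins triangle A at k to triangle B at k + (0, 1), and another joins B at k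
   to A at k + (1, -1), so along every line k + Z (1, 0) the triangles form an
   infinite chain of four-bar linkages.  Measuring the rotation of a triangle
   by the tangent of its half angle, consecutive triangles of a chain turn by
   s and -psi s (or -s and psi s), with psi s = s^2 / (3/5 s^2 - s + 3/5).
   As psi maps [0, 1/3] onto itself with a continuous inverse, iterating psi
   forwards and backwards from t in [0, 1/3] moves every triangle while keeping
   all bar lengths: this is the continuous flex, non-trivial for t > 0.
   At t = 0, however, each coupling bar is aligned with a triangle edge (the
   linkages are at a dead point), so an infinitesimal flex vanishing on one
   lattice bar vanishes on the rigid lattice, then on the triangle corners
   touched by the aligned bars, then on the remaining corners: the framework
   is first-order rigid. *)

Set Implicit Arguments.
Unset Strict Implicit.
Unset Printing Implicit Defensive.
Import Order.TTheory GRing.Theory Num.Theory.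
Local Open Scope ring_scope.

Lemma col2P (R : Type) (x y : 'cV[R]_2) :
  x ord0 0 = y ord0 0 -> x ord_max 0 = y ord_max 0 -> x = y.
Proof.
move=> h0 h1; apply/matrixP => i j; rewrite (ord1 j).
have [->|->] // : i = ord0 \/ i = ord_max.
by case: i => [[|[|//]] ?]; [left | right]; apply: val_inj.
Qed.

Lemma big_ord2 (R : nmodType) (F : 'I_2 -> R) : \sum_(i < 2) F i = F ord0 + F ord_max.
Proof. by rewrite big_ord_recr big_ord1; congr (F _ + _); apply: val_inj. Qed.

Definition pt2 (a b : RR) : pt := \col_i (if i == ord0 then a else b).

(* [Defs.edist] is qualified: MathComp-Analysis also exports an [edist]. *)
Lemma edistE (x y : pt) : Defs.edist x y =
  Num.sqrt ((x ord0 0 - y ord0 0) ^+ 2 + (x ord_max 0 - y ord_max 0) ^+ 2).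
Proof. by rewrite /Defs.edist big_ord2 !mxE. Qed.

Lemma edistC (x y : pt) : Defs.edist x y = Defs.edist y x.
Proof. by rewrite !edistE; congr Num.sqrt; ring. Qed.

Lemma edistDl (z x y : pt) : Defs.edist (z + x) (z + y) = Defs.edist x y.
Proof. by rewrite /Defs.edist [z + x]addrC addrKA. Qed.

(* Rotation by the angle 2 atan tau, in rational form. *)
Definition rot (tau : RR) (x : pt) : pt :=
  pt2 (((1 - tau ^+ 2) * x ord0 0 - 2 * tau * x ord_max 0) / (1 + tau ^+ 2))
      ((2 * tau * x ord0 0 + (1 - tau ^+ 2) * x ord_max 0) / (1 + tau ^+ 2)).

Lemma one_plus_sqr_neq0 (tau : RR) : 1 + tau ^+ 2 != 0.
Proof. by rewrite lt0r_neq0 // ltr_pwDl // sqr_ge0. Qed.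

Lemma rot0 x : rot 0 x = x.
Proof. by apply: col2P; rewrite !mxE /=; field. Qed.

Lemma rotx0 tau : rot tau 0 = 0.
Proof. by apply: col2P; rewrite !mxE !(mulr0, subr0, addr0, mul0r). Qed.

Lemma rotB tau x y : rot tau x - rot tau y = rot tau (x - y).
Proof. by apply: col2P; rewrite !mxE /=; field; rewrite one_plus_sqr_neq0. Qed.

Lemma edist_rot tau x y : Defs.edist (rot tau x) (rot tau y) = Defs.edist x y.
Proof.
rewrite /Defs.edist !big_ord2 rotB !mxE /=; congr Num.sqrt.
by field; rewrite one_plus_sqr_neq0.
Qed.

Definition det2 (a b : pt) : RR := a ord0 0 * b ord_max 0 - a ord_max 0 * b ord0 0.

(* The quarter turn [[0, -1], [1, 0]]. *)
Definition perp_mx : 'M[RR]_2 := \matrix_(i, j) ((j == ord0)%:R - (i == ord0)%:R).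

Lemma perp_mxE a : perp_mx *m a = pt2 (- a ord_max 0) (a ord0 0).
Proof. by apply: col2P; rewrite !mxE big_ord2 !mxE /=; ring. Qed.

Lemma tr_perp_mx : perp_mx^T = - perp_mx.
Proof. by apply/matrixP => i j; rewrite !mxE opprB. Qed.

Definition cdot (w : 'cV[CC]_2) (a : pt) : CC := \sum_(i < 2) w i 0 * cplx_pt a i 0.

Lemma cdotE w a : cdot w a = w ord0 0 * (a ord0 0)%:C%C + w ord_max 0 * (a ord_max 0)%:C%C.
Proof. by rewrite /cdot big_ord2 !mxE. Qed.

Lemma cdotBl w1 w2 a : cdot (w1 - w2) a = cdot w1 a - cdot w2 a.
Proof. by rewrite !cdotE !mxE; ring. Qed.

Lemma cdotZr w l a : cdot w (l *: a) = l%:C%C * cdot w a.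
Proof. by rewrite !cdotE !mxE !rmorphM; ring. Qed.

Lemma cdotNr w a : cdot w (- a) = - cdot w a.
Proof. by rewrite -scaleN1r cdotZr rmorphN1 mulN1r. Qed.

Lemma cdot_perp (om : CC) a : cdot (om *: cplx_pt (perp_mx *m a)) a = 0.
Proof. by rewrite perp_mxE cdotE !mxE /= rmorphN; ring. Qed.

Lemma cdot_indep w a b : cdot w a = 0 -> cdot w b = 0 -> det2 a b != 0 -> w = 0.
Proof.
move=> ha hb nz; have nzC : (det2 a b)%:C%C != 0 by rewrite fmorph_eq0.
have det_w0 : w ord0 0 * (det2 a b)%:C%C =
    (b ord_max 0)%:C%C * cdot w a - (a ord_max 0)%:C%C * cdot w b.
  by rewrite !cdotE /det2 rmorphB !rmorphM; ring.
have det_w1 : w ord_max 0 * (det2 a b)%:C%C =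
    (a ord0 0)%:C%C * cdot w b - (b ord0 0)%:C%C * cdot w a.
  by rewrite !cdotE /det2 rmorphB !rmorphM; ring.
apply: col2P; rewrite mxE; apply: (mulIf nzC).
  by rewrite mul0r det_w0 ha hb !mulr0 subrr.
by rewrite mul0r det_w1 ha hb !mulr0 subrr.
Qed.

Lemma cdot_eq0_perp w a : cdot w a = 0 -> a != 0 ->
  exists om, w = om *: cplx_pt (perp_mx *m a).
Proof.
move=> hw nz; pose a0 := (a ord0 0)%:C%C; pose a1 := (a ord_max 0)%:C%C.
pose N := a0 ^+ 2 + a1 ^+ 2; pose om := w ord_max 0 * a0 - w ord0 0 * a1.
have nzN : N != 0.
  rewrite /N /a0 /a1 -!rmorphXn -rmorphD fmorph_eq0; apply: contra nz.
  rewrite paddr_eq0 ?sqr_ge0 // !sqrf_eq0 => /andP [/eqP h0 /eqP h1].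
  by apply/eqP/col2P; rewrite mxE ?h0 ?h1.
have key0 : w ord0 0 * N - om * - a1 = a0 * cdot w a by rewrite cdotE /N /om /a0 /a1; ring.
have key1 : w ord_max 0 * N - om * a0 = a1 * cdot w a by rewrite cdotE /N /om /a0 /a1; ring.
exists (om / N); apply: col2P; rewrite perp_mxE !mxE /= ?rmorphN -/a0 -/a1;
  apply: (mulIf nzN); rewrite mulrAC divfK //; apply/eqP; rewrite -subr_eq0.
  by rewrite key0 hw mulr0.
by rewrite key1 hw mulr0.
Qed.

Lemma cplx_ptB a b : cplx_pt (a - b) = cplx_pt a - cplx_pt b.
Proof. by apply/matrixP => i j; rewrite !mxE rmorphB. Qed.

Section Flexes.
Variables (V : countType) (E : V -> V -> bool) (p : V -> pt).

Lemma flex_vanish2 u v w1 w2 : inf_flex E p u -> E v w1 -> E v w2 ->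
  u w1 = 0 -> u w2 = 0 -> det2 (p v - p w1) (p v - p w2) != 0 -> u v = 0.
Proof.
move=> hu e1 e2 z1 z2; apply: cdot_indep.
  by have := hu _ _ e1; rewrite z1 subr0.
by have := hu _ _ e2; rewrite z2 subr0.
Qed.

Lemma flex_vanish_collinear u z c x y l : inf_flex E p u ->
  E z c -> E z x -> E x y -> u c = 0 -> u y = 0 ->
  p x - p z = l *: (p x - p y) -> det2 (p z - p c) (p z - p x) != 0 -> u z = 0.
Proof.
move=> hu ezc ezx exy zc zy hl; apply: cdot_indep.
  by have := hu _ _ ezc; rewrite zc subr0.
have hx : cdot (u x) (p x - p y) = 0 by have := hu _ _ exy; rewrite zy subr0.
have hzx : cdot (u x) (p z - p x) = 0.
  by rewrite -opprB cdotNr hl cdotZr hx mulr0 oppr0.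
by have := hu _ _ ezx; rewrite -/(cdot _ _) cdotBl hzx subr0.
Qed.

Lemma inf_flexB u1 u2 : inf_flex E p u1 -> inf_flex E p u2 ->
  inf_flex E p (fun v => u1 v - u2 v).
Proof.
move=> h1 h2 v w e; move: (h1 v w e) (h2 v w e); rewrite -!/(cdot _ _) !cdotBl.
by move=> /eqP; rewrite subr_eq0 => /eqP -> /eqP; rewrite subr_eq0 => /eqP ->; rewrite subrr.
Qed.

Definition rigid_field (om : CC) (beta : 'cV[CC]_2) (v : V) : 'cV[CC]_2 :=
  om *: cplx_pt (perp_mx *m p v) + beta.

Lemma rigid_field_flex om beta : inf_flex E p (rigid_field om beta).
Proof.
move=> v w _; rewrite -/(cdot _ _) /rigid_field opprD addrACA subrr addr0.
by rewrite -scalerBr -cplx_ptB -mulmxBr cdot_perp.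
Qed.

Lemma rigid_field_span om beta : in_rigid_span p (rigid_field om beta).
Proof.
exists 3%N, (nth 0 [:: om; beta ord0 0; beta ord_max 0]), (nth 0 [:: perp_mx; 0; 0]),
  (nth 0 [:: 0; pt2 1 0; pt2 0 1]); split.
  by case=> [[|[|[|//]]] ?] /=; rewrite ?tr_perp_mx ?trmx0 ?oppr0.
move=> v; rewrite !big_ord_recl big_ord0 /= !mul0mx !add0r addr0 /rigid_field.
by apply: col2P; rewrite !mxE /= rmorph0 rmorph1 !(mulr0, mulr1, addr0, add0r).
Qed.

Lemma first_order_rigid_of_bar v0 v1 : E v1 v0 -> p v1 != p v0 ->
  (forall u, inf_flex E p u -> u v0 = 0 -> u v1 = 0 -> forall v, u v = 0) ->
  first_order_rigid E p.
Proof.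
move=> e10 p10 vanish u hu.
have [om hom] : exists om, u v1 - u v0 = om *: cplx_pt (perp_mx *m (p v1 - p v0)).
  by apply: cdot_eq0_perp; [exact: hu | rewrite subr_eq0].
pose r := rigid_field om (u v0 - om *: cplx_pt (perp_mx *m p v0)).
have r_v0 : r v0 = u v0 by rewrite /r /rigid_field addrC subrK.
have r_v1 : r v1 = u v1.
  by rewrite /r /rigid_field addrCA -scalerBr -cplx_ptB -mulmxBr -hom addrC subrK.
have u_eq_r : forall v, u v = r v.
  move=> v; apply/eqP; rewrite -subr_eq0; apply/eqP; move: v.
  apply: vanish; first exact: (inf_flexB hu (rigid_field_flex _ _)).
    by rewrite r_v0 subrr.
  by rewrite r_v1 subrr.
have -> : u = r by apply: funext.
exact: rigid_field_span.
Qed.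

End Flexes.

Lemma int_ind_pm (P : int -> Prop) :
  P 0 -> (forall n, P n -> P (n + 1)) -> (forall n, P n -> P (n - 1)) -> forall n, P n.
Proof.
move=> P0 Pup Pdown; elim/int_ind => // n Pn.
  by rewrite -addn1 PoszD; apply: Pup.
by rewrite -addn1 PoszD opprD; apply: Pdown.
Qed.

Lemma pairD (R1 R2 : nmodType) (a b : R1) (c d : R2) : (a, c) + (b, d) = (a + b, c + d).
Proof. by []. Qed.

Definition ipt (z : int * int) : pt := pt2 z.1%:~R z.2%:~R.

Lemma iptD a b : ipt (a + b) = ipt a + ipt b.
Proof. by apply: col2P; rewrite !mxE /= intrD. Qed.

Lemma iptB a b : ipt (a - b) = ipt a - ipt b.
Proof. by apply: col2P; rewrite !mxE /= intrB. Qed.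

Lemma ipt_inj : injective ipt.
Proof.
move=> [a1 a2] [b1 b2] h.
have := congr1 (fun x : pt => x ord0 0) h; have := congr1 (fun x : pt => x ord_max 0) h.
by rewrite !mxE /= => /eqP; rewrite eqr_int => /eqP -> /eqP; rewrite eqr_int => /eqP ->.
Qed.

Definition idet (a b : int * int) : int := a.1 * b.2 - a.2 * b.1.

Lemma det2_ipt a b : det2 (ipt a) (ipt b) = (idet a b)%:~R.
Proof. by rewrite /det2 !mxE /= intrB !intrM. Qed.

(* The vertex (k, L) is the lattice joint at lat k; (k, A1), (k, A2) and
   (k, B1), (k, B2) are the free corners of the triangles A and B hinged at it,
   placed at lat k + offset _. *)
Inductive kind := L | A1 | A2 | B1 | B2.

Definition nat_of_kind (s : kind) : nat :=
  match s with L => 0 | A1 => 1 | A2 => 2 | B1 => 3 | B2 => 4 end.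
Definition kind_of_nat (n : nat) : kind :=
  match n with 1 => A1 | 2 => A2 | 3 => B1 | 4 => B2 | _ => L end.
Lemma nat_of_kindK : cancel nat_of_kind kind_of_nat. Proof. by case. Qed.
HB.instance Definition _ := Countable.copy kind (can_type nat_of_kindK).

Definition vertex := ((int * int) * kind)%type.

Definition lat (k : int * int) : int * int := (- k.1 + 5 * k.2, k.1 + 6 * k.2).

Definition offset (s : kind) : int * int :=
  match s with L => 0 | A1 => (5, 0) | A2 => (6, -5) | B1 => (0, -5) | B2 => (5, -6) end.

Definition ipos (v : vertex) : int * int := lat v.1 + offset v.2.
Definition pos (v : vertex) : pt := ipt (ipos v).

Definition bars : seq (kind * kind * (int * int)) :=
  [:: (L, L, (1, 0)); (L, L, (0, 1)); (L, L, (-1, 1));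
      (L, A1, 0); (L, A2, 0); (A1, A2, 0);
      (L, B1, 0); (L, B2, 0); (B1, B2, 0);
      (A1, B2, (0, 1)); (B1, A2, (1, -1))].

Definition bar (v w : vertex) : bool := (v.2, w.2, w.1 - v.1) \in bars.
Definition adj (v w : vertex) : bool := bar v w || bar w v.
Definition shift (k : int * int) (v : vertex) : vertex := (v.1 + k, v.2).

Lemma lat0 : lat 0 = 0.
Proof. by []. Qed.

Lemma latD (k l : int * int) : lat (k + l) = lat k + lat l.
Proof. by rewrite /lat; congr (_, _) => /=; ring. Qed.

Lemma pos_shift k v : pos (shift k v) = pos v + ipt (lat k).
Proof. by rewrite /pos -iptD /ipos /= latD addrAC. Qed.

Lemma pos_sub v w : pos v - pos w = ipt (ipos v - ipos w).
Proof. by rewrite iptB. Qed.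

Lemma bar_shift k v w : bar (shift k v) (shift k w) = bar v w.
Proof. by rewrite /bar /= [v.1 + k]addrC addrKA. Qed.

Lemma adj_shift k v w : adj (shift k v) (shift k w) = adj v w.
Proof. by rewrite /adj !bar_shift. Qed.

Lemma adj_irrefl v : ~~ adj v v.
Proof. by rewrite /adj /bar subrr orbb; case: v => ? []. Qed.

Lemma ipos_inj : injective ipos.
Proof.
move=> [[i j] s] [[i' j'] s']; rewrite /ipos /lat /=.
by case: s; case: s' => /= -[h1 h2]; try lia; have [-> ->] : i = i' /\ j = j' by lia.
Qed.

Definition a1 : pt := ipt (-1, 1).
Definition a2 : pt := ipt (5, 6).

Lemma latvec_lat k : latvec a1 a2 k = ipt (lat k).
Proof. by apply: col2P; rewrite !mxE /= !(intrD, intrM, intrN) /=; ring. Qed.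

Definition bar_reps : seq (vertex * vertex) := [seq ((0, b.1.1), (b.2, b.1.2)) | b <- bars].

Lemma bar_orbit v w : bar v w ->
  ((0, v.2), (w.1 - v.1, w.2)) \in bar_reps /\
  v = shift v.1 (0, v.2) /\ w = shift v.1 (w.1 - v.1, w.2).
Proof.
case: v w => [k s] [k' s'] hb; split; first exact: (map_f _ hb).
by rewrite /shift /= add0r subrK.
Qed.

Lemma crystal_adj_pos : crystal_framework adj pos.
Proof.
split; first by move=> v w; rewrite /adj orbC.
split; first exact: adj_irrefl.
split; first by move=> v w /ipt_inj /ipos_inj.
exists a1, a2, shift.
split.
  move=> c1 c2 /matrixP h; have := h ord0 0; have := h ord_max 0.
  by rewrite !mxE /=; lra.
split; first by case=> k s; rewrite /shift (_ : (0, 0) = 0) // addr0.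
split.
  by move=> k l [k' s]; rewrite /shift (_ : (k.1 + l.1, k.2 + l.2) = k + l) // addrA addrAC.
split; first exact: adj_shift.
split; first by move=> k v; rewrite pos_shift latvec_lat.
split.
  exists [seq (0, s) | s <- [:: L; A1; A2; B1; B2]] => -[k s].
  by exists k, (0, s); split; [case: s | rewrite /shift add0r].
exists bar_reps => v w; rewrite /adj => /orP [] /bar_orbit [hs [ev ew]].
  by exists v.1, ((0, v.2), (w.1 - v.1, w.2)); split; [| left].
by exists w.1, ((0, w.2), (v.1 - w.1, v.2)); split; [| right].
Qed.

Lemma inf_flex_shift u k : inf_flex adj pos u -> inf_flex adj pos (u \o shift k).
Proof.
move=> hu v w e; have := hu _ _ (etrans (adj_shift k v w) e).
by rewrite !pos_shift [pos w + _]addrC addrKA.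
Qed.

Section LocalVanishing.
Variable u : vertex -> 'cV[CC]_2.
Hypothesis hu : inf_flex adj pos u.

Lemma pos_flex_vanish2 v w1 w2 : adj v w1 -> adj v w2 -> u w1 = 0 -> u w2 = 0 ->
  idet (ipos v - ipos w1) (ipos v - ipos w2) != 0 -> u v = 0.
Proof.
move=> e1 e2 z1 z2 nz; apply: (flex_vanish2 hu e1 e2 z1 z2).
by rewrite !pos_sub det2_ipt intr_eq0.
Qed.

Lemma pos_flex_vanish_collinear z c x y :
  adj z c -> adj z x -> adj x y -> u c = 0 -> u y = 0 ->
  ipos x - ipos z = ipos y - ipos x ->
  idet (ipos z - ipos c) (ipos z - ipos x) != 0 -> u z = 0.
Proof.
move=> ezc ezx exy zc zy hxz nz; apply: (flex_vanish_collinear (l := -1) hu ezc ezx exy zc zy).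
  by rewrite scaleN1r opprB !pos_sub hxz.
by rewrite !pos_sub det2_ipt intr_eq0.
Qed.

Definition bar_vanish k := u (k, L) = 0 /\ u (k + (1, 0), L) = 0.

Lemma bar_vanish_up : bar_vanish 0 -> bar_vanish (0, 1).
Proof.
case=> h00 h10.
have h01 : u ((0, 1), L) = 0 by apply: (pos_flex_vanish2 (w1 := (0, L)) (w2 := ((1, 0), L))).
by split => //; apply: (pos_flex_vanish2 (w1 := ((1, 0), L)) (w2 := ((0, 1), L))).
Qed.

Lemma bar_vanish_down : bar_vanish 0 -> bar_vanish (0, -1).
Proof.
case=> h00 h10.
have h1m : u ((1, -1), L) = 0 by apply: (pos_flex_vanish2 (w1 := ((1, 0), L)) (w2 := (0, L))).
by split => //; apply: (pos_flex_vanish2 (w1 := (0, L)) (w2 := ((1, -1), L))).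
Qed.

Lemma bar_vanish_right : bar_vanish 0 -> bar_vanish (1, 0).
Proof.
move=> h; have [h00 h10] := h; have [h01 h11] := bar_vanish_up h.
by split => //; apply: (pos_flex_vanish2 (w1 := ((1, 0), L)) (w2 := ((1, 1), L))).
Qed.

Lemma bar_vanish_left : bar_vanish 0 -> bar_vanish (-1, 0).
Proof.
move=> h; have [h00 h10] := h; have [h0m h1m] := bar_vanish_down h.
by split => //; apply: (pos_flex_vanish2 (w1 := (0, L)) (w2 := ((0, -1), L))).
Qed.

Lemma hanging_vanish : (forall k, u (k, L) = 0) -> forall s, u (0, s) = 0.
Proof.
move=> hL.
have hB2 : u (0, B2) = 0.
  by apply: (pos_flex_vanish_collinear (c := (0, L)) (x := ((0, -1), A1)) (y := ((0, -1), L))).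
have hB1 : u (0, B1) = 0 by apply: (pos_flex_vanish2 (w1 := (0, L)) (w2 := (0, B2))).
have hA2 : u (0, A2) = 0.
  by apply: (pos_flex_vanish_collinear (c := (0, L)) (x := ((-1, 1), B1)) (y := ((-1, 1), L))).
have hA1 : u (0, A1) = 0 by apply: (pos_flex_vanish2 (w1 := (0, L)) (w2 := (0, A2))).
by case.
Qed.

End LocalVanishing.

Lemma bar_vanish_shift u k d : bar_vanish (u \o shift k) d = bar_vanish u (k + d).
Proof. by rewrite /bar_vanish /shift /= addrAC [d + k]addrC. Qed.

Lemma lattice_vanish u : inf_flex adj pos u -> bar_vanish u 0 -> forall k, bar_vanish u k.
Proof.
move=> hu h0.
have step k d : (forall w, inf_flex adj pos w -> bar_vanish w 0 -> bar_vanish w d) ->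
    bar_vanish u k -> bar_vanish u (k + d).
  move=> hd hk; rewrite -bar_vanish_shift; apply: hd; first exact: inf_flex_shift.
  by rewrite bar_vanish_shift addr0.
have row i : bar_vanish u (i, 0).
  elim/int_ind_pm: i => [// | i hi | i hi].
    exact: (step _ (1, 0) bar_vanish_right hi).
  exact: (step _ (-1, 0) bar_vanish_left hi).
move=> [i j]; elim/int_ind_pm: j => [| j hj | j hj]; first exact: row.
  by have := step _ (0, 1) bar_vanish_up hj; rewrite pairD addr0.
by have := step _ (0, -1) bar_vanish_down hj; rewrite pairD addr0.
Qed.

Lemma flex_vanish_all u : inf_flex adj pos u -> bar_vanish u 0 -> forall v, u v = 0.
Proof.
move=> hu h0 [k s].
have hL k' : (u \o shift k) (k', L) = 0 by have [] := lattice_vanish hu h0 (k' + k).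
by have := hanging_vanish (inf_flex_shift k hu) hL s; rewrite /= /shift add0r.
Qed.

Lemma first_order_rigid_adj_pos : first_order_rigid adj pos.
Proof.
apply: (@first_order_rigid_of_bar _ adj pos (0, L) ((1, 0), L)) => //.
  by rewrite /pos (inj_eq ipt_inj).
by move=> u hu h0 h1; apply: flex_vanish_all.
Qed.

Lemma continuous_ratio (f g : RR -> RR) : continuous f -> continuous g ->
  (forall x, g x != 0) -> continuous (fun x => f x / g x).
Proof. by move=> hf hg nz x; exact: (continuousM (hf x) (continuousV (nz x) (hg x))). Qed.

Lemma continuous_opp (f : RR -> RR) : continuous f -> continuous (fun x => - f x).
Proof. move=> hf x; have := @continuousN _ RR^o _ f x (hf x). exact. Qed.

Lemma continuous_pt2 (T : topologicalType) (f g : T -> RR) :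
  continuous f -> continuous g -> continuous (fun t => pt2 (f t) (g t)).
Proof.
move=> hf hg t.
have -> : (fun t => pt2 (f t) (g t)) = (fun t => f t *: pt2 1 0 + g t *: pt2 0 1).
  by apply: funext => t'; apply: col2P; rewrite !mxE /= !(mulr1, mulr0, addr0, add0r).
have := continuousD (@continuousZr_tmp _ pt _ _ (pt2 1 0) _ (hf t))
  (@continuousZr_tmp _ pt _ _ (pt2 0 1) _ (hg t)).
exact.
Qed.

Lemma continuous_poly_fun (f : RR -> RR) (p : {poly RR}) :
  (forall x, f x = p.[x]) -> continuous f.
Proof. by move=> fp; rewrite (funext fp); exact: continuous_horner. Qed.

Lemma rot_continuous x : continuous (fun tau => rot tau x).
Proof.
have den : continuous (fun tau : RR => 1 + tau ^+ 2).
  by apply: (continuous_poly_fun (p := 1 + 'X * 'X)) => tau; rewrite !hornerE /=; ring.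
apply: continuous_pt2; apply: continuous_ratio => //; try exact: one_plus_sqr_neq0.
- apply: (continuous_poly_fun
    (p := (x ord0 0)%:P - (2 * x ord_max 0) *: 'X - x ord0 0 *: ('X * 'X))).
  by move=> tau; rewrite !hornerE /=; ring.
- apply: (continuous_poly_fun
    (p := (x ord_max 0)%:P + (2 * x ord0 0) *: 'X - x ord_max 0 *: ('X * 'X))).
  by move=> tau; rewrite !hornerE /=; ring.
Qed.

(* Turning triangle A by the angle with half-angle tangent [s] forces, through the
   bar A1-B2, the next triangle B to turn by [- psi s]; the bar B1-A2 transmits
   the same map with the roles of the two triangles exchanged. *)
Definition psi (s : RR) : RR := s ^+ 2 / (3/5 * s ^+ 2 - s + 3/5).

(* The nonnegative root [s] of [psi s = y], i.e. of
   [(1 - 3/5 y) s^2 + y s - 3/5 y = 0]; the [max] only keeps the denominator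
   away from [0] outside [[0, 1/3]]. *)
Definition chi (y : RR) : RR :=
  (Num.sqrt (y ^+ 2 + 12/5 * y * (1 - 3/5 * y)) - y) / Num.max (2 - 6/5 * y) 1.

Lemma psi_den_gt0 (s : RR) : 0 < 3/5 * s ^+ 2 - s + 3/5.
Proof.
have -> : 3/5 * s ^+ 2 - s + 3/5 = 3/5 * (s - 5/6) ^+ 2 + 11/60 by field.
by have := sqr_ge0 (s - 5/6); lra.
Qed.

Lemma psi0 : psi 0 = 0.
Proof. by rewrite /psi expr0n mul0r. Qed.

Lemma psi_itv (s : RR) : s \in `[0, 1/3] -> psi s \in `[0, 1/3].
Proof.
rewrite !in_itv /= => /andP [s_ge0 s_le]; have den := psi_den_gt0 s.
rewrite /psi divr_ge0 ?sqr_ge0 ?(ltW den) //= ler_pdivrMr //.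
have : 0 <= (1/3 - s) * (4 * s + 3) by apply: mulr_ge0; lra.
by lra.
Qed.

Lemma psi_continuous : continuous psi.
Proof.
apply: continuous_ratio => [||s]; last by rewrite gt_eqF ?psi_den_gt0.
  by apply: (continuous_poly_fun (p := 'X * 'X)) => s; rewrite !hornerE /=; ring.
apply: (continuous_poly_fun (p := (3/5) *: ('X * 'X) - 'X + (3/5)%:P)) => s.
by rewrite !hornerE /=; ring.
Qed.

Lemma chi_root (y : RR) : 0 <= y <= 1/3 ->
  let m := 1 - 3/5 * y in let r := Num.sqrt (y ^+ 2 + 12/5 * y * m) in
  [/\ 0 < m, 0 <= r, r ^+ 2 = y ^+ 2 + 12/5 * y * m & chi y = (r - y) / (2 * m)].
Proof.
move=> /andP [y_ge0 y_le] m r; have m_gt0 : 0 < m by rewrite /m; lra.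
split => //; first exact: sqrtr_ge0.
  by rewrite sqr_sqrtr //; nra.
rewrite /chi (_ : 2 - 6/5 * y = 2 * m); last by rewrite /m; field.
by rewrite (max_idPl _) //; rewrite /m; lra.
Qed.

Lemma chi_itv (y : RR) : y \in `[0, 1/3] -> chi y \in `[0, 1/3].
Proof.
rewrite in_itv /= => /[dup] /andP [y_ge0 y_le] /chi_root [m_gt0 r_ge0 r_sqr ->].
set m := 1 - 3/5 * y in m_gt0 r_sqr *; set r := Num.sqrt _ in r_ge0 r_sqr *.
have y_le_r : y <= r by rewrite -ler_sqr ?nnegrE // r_sqr; nra.
have r_le : r <= y + 2 * m / 3.
  rewrite -ler_sqr ?nnegrE //; last by rewrite /m; lra.
  have : 0 <= m * (1 - 3 * y) by rewrite mulr_ge0 ?(ltW m_gt0) //; lra.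
  by rewrite r_sqr /m; nra.
rewrite in_itv /= divr_ge0 ?subr_ge0 ?mulr_ge0 ?(ltW m_gt0) //=.
by rewrite ler_pdivrMr ?mulr_gt0 //; lra.
Qed.

Lemma chiK (y : RR) : y \in `[0, 1/3] -> psi (chi y) = y.
Proof.
rewrite in_itv /= => /chi_root [m_gt0 r_ge0 r_sqr chiE].
set m := 1 - 3/5 * y in m_gt0 r_sqr chiE; set r := Num.sqrt _ in r_ge0 r_sqr chiE.
set s := chi y.
have two_m_s : 2 * m * s = r - y by rewrite /s chiE mulrC divfK // mulf_neq0 // gt_eqF.
have quad : m * s ^+ 2 + y * s - 3/5 * y = 0.
  apply: (mulfI (_ : 4 * m != 0)); first by rewrite mulf_neq0 // gt_eqF.
  rewrite mulr0 (_ : 4 * m * _ = (2 * m * s) ^+ 2 + 2 * y * (2 * m * s) - 12/5 * y * m);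
    last by field.
  by rewrite two_m_s (_ : (r - y) ^+ 2 + 2 * y * (r - y) = r ^+ 2 - y ^+ 2);
    [rewrite r_sqr; ring | ring].
rewrite /psi {1}(_ : s ^+ 2 = y * (3/5 * s ^+ 2 - s + 3/5)).
  by rewrite mulfK // gt_eqF // psi_den_gt0.
have : s ^+ 2 - y * (3/5 * s ^+ 2 - s + 3/5) = m * s ^+ 2 + y * s - 3/5 * y.
  by rewrite /m; field.
by rewrite quad => /eqP; rewrite subr_eq0 => /eqP.
Qed.

Lemma chi0 : chi 0 = 0.
Proof. by rewrite /chi expr0n mulr0 !mul0r addr0 sqrtr0 subrr mul0r. Qed.

Lemma chi_continuous : continuous chi.
Proof.
apply: continuous_ratio => [||y].
- have disc : continuous (fun y : RR => y ^+ 2 + 12/5 * y * (1 - 3/5 * y)).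
    apply: (continuous_poly_fun (p := (12/5) *: 'X - (11/25) *: ('X * 'X))) => z.
    by rewrite !hornerE /=; field.
  move=> y; have sqrt_disc := continuous_comp (disc y) (@sqrt_continuous RR _).
  exact: (@continuousB _ RR^o _ _ _ y sqrt_disc cvg_id).
- have lin : continuous (fun y : RR => 2 - 6/5 * y).
    by apply: (continuous_poly_fun (p := 2%:P - (6/5) *: 'X)) => z; rewrite !hornerE /=; field.
  move=> y; have := continuous_max (lin y) (@cst_continuous _ RR^o 1 y).
  exact.
- by rewrite gt_eqF // (lt_le_trans ltr01) // le_max lexx orbT.
Qed.

(* [psi] iterated [n] times, [chi] iterated [-n] times when [n < 0]
   ([Negz k] is [-(k+1)]). *)
Definition turn (n : int) (t : RR) : RR :=
  match n with Posz k => iter k psi t | Negz k => iter k.+1 chi t end.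

Lemma iter_continuous (f : RR -> RR) k : continuous f -> continuous (iter k f).
Proof.
move=> hf; elim: k => [|k IHk] /= t; first exact: cvg_id.
exact: (continuous_comp (IHk t) (hf _)).
Qed.

Lemma turn_continuous n : continuous (turn n).
Proof.
by case: n => k; apply: iter_continuous; [exact: psi_continuous | exact: chi_continuous].
Qed.

Lemma turn_at0 n : turn n 0 = 0.
Proof.
by case: n => k /=; [elim: k => //= k ->; rewrite psi0 | elim: k => /= [|k ->]; rewrite chi0].
Qed.

Lemma turn_itv n t : t \in `[0, 1/3] -> turn n t \in `[0, 1/3].
Proof.
move=> ht; case: n => k /=; first by elim: k => //= k; apply: psi_itv.
by elim: k => /= [|k]; apply: chi_itv.
Qed.

Lemma turnS n t : t \in `[0, 1/3] -> turn (n + 1) t = psi (turn n t).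
Proof.
move=> ht; case: n => [k|[|k]].
- by rewrite -[1]/(Posz 1) -PoszD addn1.
- by rewrite /= chiK.
- have -> : Negz k.+1 + 1 = Negz k by rewrite !NegzE; lia.
  by rewrite [in RHS]/= chiK // (turn_itv (Negz k) ht).
Qed.

Definition body_turn (t : RR) (v : vertex) : RR :=
  match v.2 with
  | L => 0
  | A1 | A2 => turn (2 * v.1.1) t
  | B1 | B2 => - turn (2 * v.1.1 + 1) t
  end.

Definition place (t : RR) (v : vertex) : pt :=
  ipt (lat v.1) + rot (body_turn t v) (ipt (offset v.2)).

Lemma ipt0 : ipt 0 = 0.
Proof. by apply: col2P; rewrite !mxE. Qed.

Lemma place0 : place 0 = pos.
Proof.
apply: funext => -[k s]; rewrite /place /pos /ipos iptD /body_turn.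
by case: s; rewrite /= ?turn_at0 ?oppr0 rot0.
Qed.

Lemma place_continuous v : continuous (fun t => place t v).
Proof.
have turn_cont : continuous (fun t => body_turn t v).
  rewrite /body_turn; case: v.2.
  - exact: cst_continuous.
  - exact: turn_continuous.
  - exact: turn_continuous.
  - exact: continuous_opp (@turn_continuous _).
  - exact: continuous_opp (@turn_continuous _).
move=> t; have := continuousD (@cst_continuous _ pt (ipt (lat v.1)) t)
  (continuous_comp (turn_cont t) (@rot_continuous (ipt (offset v.2)) _)).
exact.
Qed.

Lemma edist_rot0 tau x : Defs.edist 0 (rot tau x) = Defs.edist 0 x.
Proof. by rewrite -{1}(rotx0 tau) edist_rot. Qed.

Lemma coupling_A1B2 (s : RR) :
  Defs.edist (rot s (ipt (5, 0))) (ipt (5, 6) + rot (- psi s) (ipt (5, -6))) =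
  Defs.edist (ipt (5, 0)) (ipt (5, 6) + ipt (5, -6)).
Proof.
rewrite !edistE !mxE /=; congr Num.sqrt; rewrite /psi.
have den : 0 < 3 * s ^+ 2 + - s * 5 + 3 by have := psi_den_gt0 s; lra.
by field; apply/and3P; split; apply: lt0r_neq0; nra.
Qed.

Lemma coupling_B1A2 (s : RR) :
  Defs.edist (rot (- s) (ipt (0, -5))) (ipt (-6, -5) + rot (psi s) (ipt (6, -5))) =
  Defs.edist (ipt (0, -5)) (ipt (-6, -5) + ipt (6, -5)).
Proof.
rewrite !edistE !mxE /=; congr Num.sqrt; rewrite /psi.
have den : 0 < 3 * s ^+ 2 + - s * 5 + 3 by have := psi_den_gt0 s; lra.
by field; apply/and3P; split; apply: lt0r_neq0; nra.
Qed.

Lemma edist_place_bar t k s s' d : t \in `[0, 1/3] -> (s, s', d) \in bars ->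
  Defs.edist (place t (k, s)) (place t (k + d, s')) =
  Defs.edist (pos (k, s)) (pos (k + d, s')).
Proof.
move=> ht; rewrite /place /pos /ipos /= latD !iptD -!addrA !edistDl.
rewrite /bars !inE !xpair_eqE; case: s; case: s' => /=; rewrite ?orbF => hb;
  try discriminate hb; first by rewrite ipt0 !rotx0.
all: move/eqP: hb => ->.
all: rewrite ?addr0 /body_turn /= ?addr0 ?lat0 ?ipt0 ?add0r ?rotx0.
all: try exact: edist_rot0; try exact: edist_rot.
  by rewrite (turnS _ ht) (_ : lat (0, 1) = (5, 6)) ?coupling_A1B2.
have -> : 2 * (k.1 + 1) = 2 * k.1 + 1 + 1 by ring.
by rewrite (turnS (2 * k.1 + 1) ht) (_ : lat (1, -1) = (-6, -5)) ?coupling_B1A2.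
Qed.

Lemma place_not_congruent :
  ~ exists T : pt -> pt, isometry2 T /\ forall v, place (1/3) v = T (pos v).
Proof.
case=> T [isoT hT]; have := isoT (pos (0, A1)) (pos ((1, 0), L)).
rewrite -!hT /place /body_turn /= ipt0 rotx0 addr0 !edistE !mxE /=.
move/(congr1 (fun r : RR => r ^+ 2)); rewrite !sqr_sqrtr ?addr_ge0 ?sqr_ge0 //.
move/eqP; rewrite -subr_eq0 => /eqP h.
have : (-8 : RR) = 0 by rewrite -h; field.
lra.
Qed.

Lemma continuously_flexible_adj_pos : continuously_flexible adj pos.
Proof.
exists (1/3), place; split; first by [].
split; first exact: place0.
split; first by move=> v; apply: continuous_subspaceT; exact: place_continuous.
split; last by exists (1/3); split; [rewrite in_itv /=; lra | exact: place_not_congruent].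
move=> t ht [k s] [k' s']; rewrite /adj /bar /= => /orP [] hb.
  by rewrite -(subrKC k k'); exact: edist_place_bar.
by rewrite edistC [RHS]edistC -(subrKC k' k); exact: edist_place_bar.
Qed.

Theorem mainTheorem4 :
  exists (V : countType) (E : V -> V -> bool) (p : V -> pt),
    crystal_framework E p /\ first_order_rigid E p /\ continuously_flexible E p.
Proof.
exists vertex, adj, pos.
split; first exact: crystal_adj_pos.
by split; [exact: first_order_rigid_adj_pos | exact: continuously_flexible_adj_pos].
Qed.
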